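(* Let $0\le b<d\le n$ be integers and fix a homological degree. (1) If $\hat z$ is a relative cycle of $\hat K(b,d]$ that contains $\tau\times\{d\}$ with $\min\tau=d$ and whose boundary contains $\sigma\times\{b\}$ with $\min\sigma=b$, then $[\hat z]$ lies neither in the image of $H(\hat K(b-1,d])$ nor in the image of $H(\hat K(b,d-1])$ in $H(\hat K(b,d])$ (i.e. $\hat z$ is an apex representative). (2) If $\hat z$ is a relative cycle of $\hat K[b,d)$ that contains $\tau\times\{b\}$ with $\max\tau=b$ and whose boundary contains $\sigma\times\{d\}$ with $\max\sigma=d$, then $[\hat z]$ lies neither in the image of $H(\hat K[b+1,d))$ nor in the image of $H(\hat K[b,d+1))$ in $H(\hat K[b,d))$. (3) If $\hat z$ is a cycle of $\hat K[b,d]$ that contains $\sigma\times\{b\}$ and $\tau\times\{d\}$ with $\max\sigma=b$ and $\min\tau=d$, then $[\hat z]$ lies neither in the image of $H(\hat K[b+1,d])$ nor in the image of $H(\hat K[b,d-1])$ in $H(\hat K[b,d])$. (4) If $\hat z$ is a relative cycle of $\hat K(b,d)$ whose boundary contains $\sigma\times\{b\}$ with $\min\sigma=b$ and $\tau\times\{d\}$ with $\max\tau=d$, then $[\hat z]$ lies neither in the image of $H(\hat K(b-1,d))$ nor in the image of $H(\hat K(b,d+1))$ in $H(\hat K(b,d))$.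
   Context: Fix a field $\mathbb F$; all chains and homology groups have coefficients in $\mathbb F$. Let $n\ge 1$ and let $K$ be a finite $\Delta$-complex (distinct simplices may have the same boundary) in which every simplex $\sigma$ carries an integer interval $T(\sigma)=[\min\sigma,\max\sigma]\subseteq[0,n]$ with $\min\sigma<\max\sigma$, such that for each integer $i$ the set $K_i=\{\sigma: i\in T(\sigma)\}$ is a subcomplex (these form a zigzag $K_0\to K_1\leftarrow K_2\to\cdots$), and such that whenever $\sigma$ is a proper face of $\tau$ we have $\min\sigma<\min\tau<\max\tau<\max\sigma$. The prism $\hat K$ is the cell complex whose cells are the vertical cells $\sigma\times\{i\}$ for $\sigma\in K$ and integers $i\in T(\sigma)$ (of dimension $\dim\sigma$) and the horizontal cells $\sigma\times[i,i+1]$ for integers $i$ with $[i,i+1]\subseteq T(\sigma)$ (of dimension $\dim\sigma+1$), with boundary $\partial(\sigma\times\{i\})=(\partial\sigma)\times\{i\}$ and $\partial(\sigma\times[i,i+1])=(\partial\sigma)\times[i,i+1]+(-1)^{\dim\sigma}(\sigma\times\{i+1\}-\sigma\times\{i\})$ (terms not in $\hat K$ do not occur). For integers $i\le j$, $\hat K_i^j$ is the subcomplex of cells $\sigma\times T$ with $T\subseteq[i,j]$; so $\hat K_{-1}^{n+1}=\hat K$. For integers $b\le d$ define the pairs $\hat K[b,d]=(\hat K_b^d,\emptyset)$, $\hat K(b,d]=(\hat K_{-1}^d,\hat K_{-1}^b)$, $\hat K[b,d)=(\hat K_b^{n+1},\hat K_d^{n+1})$, $\hat K(b,d)=(\hat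 K,\hat K_{-1}^b\cup\hat K_d^{n+1})$, and write $H(\cdot)$ for their relative homology; maps between these groups are induced by inclusions of pairs. A relative cycle of a pair $(X,A)$ is a chain in $X$ whose boundary lies in $A$. A chain ''contains'' a cell if the cell's coefficient is nonzero. *)

From HB Require Import structures.
From mathcomp Require Import all_boot all_order all_algebra.
Set Implicit Arguments. Unset Strict Implicit. Unset Printing Implicit Defensive.
Import GRing.Theory Num.Theory.
Local Open Scope ring_scope.

(** Data of a finite Delta-complex K with interval labels T(s) = [tmin s, tmax s]
    inside [0,n].  [face s j] is the j-th face d_j s (meaningful for
    0 < sdim s and j <= sdim s). *)
Record dcx (n : nat) := DCx {
  simp : finType;
  sdim : simp -> nat;
  face : simp -> nat -> simp;
  tmin : simp -> nat;
  tmax : simp -> nat }.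

Section Defs.
Variables (F : fieldType) (n : nat) (K : dcx n).

Definition facet : rel (simp K) := fun t s =>
  (0 < sdim t)%N && [exists j : 'I_(sdim t).+1, face t j == s].

Definition proper_face (s t : simp K) : bool :=
  [exists u, facet t u && connect facet u s].

Definition dcx_axioms : Prop :=
  [/\
      forall (s : simp K) j, (0 < sdim s)%N -> (j <= sdim s)%N ->
        sdim (face s j) = (sdim s).-1,
      forall (s : simp K) i j, (1 < sdim s)%N -> (i < j)%N -> (j <= sdim s)%N ->
        face (face s j) i = face (face s i) j.-1,
      forall s : simp K, (tmin s < tmax s)%N /\ (tmax s <= n)%N,
      (* each K_i is a subcomplex *)
      forall (i : nat) s t, proper_face s t ->
        (tmin t <= i <= tmax t)%N -> (tmin s <= i <= tmax s)%N &
      forall s t, proper_face s t ->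
        [/\ (tmin s < tmin t)%N, (tmin t < tmax t)%N & (tmax t < tmax s)%N]].

(** Cells of the prism: (s, i, false) = s x {i}, (s, i, true) = s x [i,i+1]. *)
Definition cell := (simp K * 'I_n.+1 * bool)%type.
HB.instance Definition _ := Finite.on cell.

Definition valid (x : cell) : bool :=
  let: (s, i, h) := x in
  if h then (tmin s <= i < tmax s)%N else (tmin s <= i <= tmax s)%N.

Definition cdim (x : cell) : nat := (sdim x.1.1 + x.2)%N.

(* cellular chains (all degrees at once) with coefficients in F *)
Local Notation chain := {ffun cell -> F}.

Definition delta (y : cell) : chain :=
  [ffun x => if valid y && (x == y) then 1 else 0].

Definition scl (a : F) (v : chain) : chain := [ffun x => a * v x].

Definition bd_cell (x : cell) : chain :=
  let: (s, i, h) := x in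
  let fs := if (0 < sdim s)%N then
              \sum_(j < (sdim s).+1) scl ((-1) ^+ j) (delta (face s j, i, h))
            else 0 in
  if h then fs + scl ((-1) ^+ (sdim s)) (delta (s, inord i.+1, false) - delta (s, i, false))
  else fs.

Definition bdry (c : chain) : chain := \sum_(x | valid x) scl (c x) (bd_cell x).

(** Subcomplex \hat K_i^j : cells s x T with T inside [i,j]. *)
Definition inK (i j : int) : pred cell := fun x =>
  let: (s, t, h) := x in
  [&& valid x, (i <= Posz t) & (Posz (t + h) <= j)].

Definition pair := (pred cell * pred cell)%type.

Definition KCC (b d : int) : pair := (inK b d, fun _ => false).
Definition KOC (b d : int) : pair := (inK (-1) d, inK (-1) b).
Definition KCO (b d : int) : pair := (inK b (Posz n + 1), inK d (Posz n + 1)).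
Definition KOO (b d : int) : pair :=
  (inK (-1) (Posz n + 1), (fun x => inK (-1) b x || inK d (Posz n + 1) x)).

Definition relcycle (p : nat) (P : pair) (z : chain) : Prop :=
  (forall x, z x != 0 -> P.1 x /\ cdim x = p) /\
  (forall x, bdry z x != 0 -> P.2 x).

Definition relbdry (p : nat) (P : pair) (w : chain) : Prop :=
  exists e a : chain,
    [/\ forall x, e x != 0 -> P.1 x /\ cdim x = p.+1,
        forall x, a x != 0 -> P.2 x &
        w = bdry e + a].

(* the class [z] in H_p(P) lies in the image of H_p(P') -> H_p(P) induced by inclusion *)
Definition in_image (p : nat) (P' P : pair) (z : chain) : Prop :=
  exists z' : chain, relcycle p P' z' /\ relbdry p P (z - z').

End Defs.

Notation chain F K := {ffun cell K -> F%type}.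

From HB Require Import structures.
From mathcomp Require Import all_boot all_order all_algebra zify.
Import GRing.Theory Num.Theory.
Local Open Scope ring_scope.

Set Implicit Arguments. Unset Strict Implicit. Unset Printing Implicit Defensive.

(** If [z] is homologous in (X, A) to a cycle [z'] of (X', A'), then
    [z = z' + bdry e + a].  A cell [y] lying outside X' and A, none of whose
    cofaces lies in X, therefore has coefficient 0 in [z]; similarly for
    coefficients of [bdry z], using [bdry (bdry e) = 0] near [y].  Now a
    vertical cell [s x {i}] with [i = min s] has [s x [i,i+1]] as its only
    coface, and the latter has none at all, since a coface [u] of [s] is born
    strictly after [s] (dually at [i = max s]).  In each of the eight claims
    the distinguished cell and its unique coface avoid the relevant subcomplexes,
    so [z] (resp. [bdry z]) would vanish there, contradicting the hypotheses. *)

Section PrismBoundary.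
Variables (F : fieldType) (n : nat) (K : dcx n).
Hypothesis HK : dcx_axioms K.
Implicit Types (c z : chain F K) (x y : cell K) (s u : simp K).

Lemma bdryE c y : bdry c y = \sum_(x | valid x) c x * bd_cell F x y.
Proof. by rewrite /bdry sum_ffunE; apply: eq_bigr => x _; rewrite ffunE. Qed.

Lemma bdry_eq0 c y :
  (forall x, valid x -> bd_cell F x y != 0 -> c x = 0) -> bdry c y = 0.
Proof.
move=> c0; rewrite bdryE; apply: big1 => x vx.
have [->|/(c0 x vx) ->] := eqVneq (bd_cell F x y) 0; by rewrite (mulr0, mul0r).
Qed.

Lemma facet_bd_supp u (i : 'I_n.+1) h y :
  (if (0 < sdim u)%N then
     \sum_(j < (sdim u).+1) scl ((-1) ^+ j) (@delta F n K (face u j, i, h))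
   else 0) y != 0 -> exists2 s, y = (s, i, h) & facet u s.
Proof.
case: ifP => u_pos; last by rewrite ffunE eqxx.
rewrite sum_ffunE => /eqP nz.
have [j _] : exists2 j : 'I_(sdim u).+1, true &
    scl ((-1) ^+ j) (@delta F n K (face u j, i, h)) y != 0.
  by apply/exists_inP; apply: contraT => /exists_inPn z0;
     case: nz; apply: big1 => j _; apply/eqP/negbNE/z0.
rewrite !ffunE; case: ifP => [/andP[_ /eqP ->] _|]; last by rewrite mulr0 eqxx.
by exists (face u j); rewrite // /facet u_pos; apply/existsP; exists j.
Qed.

Lemma bd_cell_supp u (i : 'I_n.+1) h y :
  bd_cell F (u, i, h) y != 0 ->
  (exists2 s, y = (s, i, h) & facet u s) \/
  (h /\ (y = (u, i, false) \/ y = (u, inord i.+1, false))).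
Proof.
rewrite /bd_cell; case: h; last by left; apply: facet_bd_supp.
rewrite ffunE; set f := (X in X y + _).
have [->|nz _] := eqVneq (f y) 0; last by left; apply: facet_bd_supp nz.
rewrite add0r !ffunE.
have [->|ne1] := eqVneq y (u, i, false); first by right; split; [|left].
have [->|ne2] := eqVneq y (u, inord i.+1, false); first by right; split; [|right].
by rewrite !andbF subrr mulr0 eqxx.
Qed.

Lemma facet_interval u s : facet u s -> (tmin s < tmin u)%N /\ (tmax u < tmax s)%N.
Proof.
move=> fus; case: HK => _ _ _ _ /(_ s u) nested.
by case: nested => [|? _ ?] //; apply/existsP; exists s; rewrite fus connect0.
Qed.

Lemma tmax_le_n u : (tmax u <= n)%N.
Proof. by case: HK => _ _ /(_ u) []. Qed.

Lemma coface_at_birth s (i : 'I_n.+1) x :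
  tmin s = i -> valid x -> bd_cell F x (s, i, false) != 0 -> x = (s, i, true).
Proof.
move: x => [[u j] h] births vx /bd_cell_supp
  [[s' [? ? ?] /facet_interval] | [hT [[? ?] | [? /(congr1 val) ij]]]]; subst.
- by move: vx => /=; lia.
- by rewrite hT.
rewrite hT /= in vx; have jn : (j.+1 < n.+1)%N by have := tmax_le_n u; lia.
by rewrite /= inordK in ij; lia.
Qed.

Lemma coface_at_death s (i : 'I_n.+1) x :
  tmax s = i -> valid x -> bd_cell F x (s, i, false) != 0 ->
  exists2 j : 'I_n.+1, x = (s, j, true) & j.+1 = i.
Proof.
move: x => [[u j] h] dies vx /bd_cell_supp
  [[s' [? ? ?] /facet_interval] | [hT [[? ?] | [? /(congr1 val) ij]]]]; subst.
- by move: vx => /=; lia.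
- by rewrite hT /= in vx; lia.
rewrite hT /= in vx; have jn : (j.+1 < n.+1)%N by have := tmax_le_n u; lia.
by exists j; rewrite ?hT // ij /= inordK.
Qed.

Lemma coface_of_horizontal s (j : 'I_n.+1) x :
  valid x -> bd_cell F x (s, j, true) != 0 -> (tmin s < j)%N /\ (j.+1 < tmax s)%N.
Proof.
move: x => [[u i] h] vx /bd_cell_supp [[s' [? ? ?] /facet_interval] | [_ []]] //.
by subst; move: vx => /=; lia.
Qed.

Lemma bdry_bdry_at_birth c s (i : 'I_n.+1) :
  tmin s = i -> bdry (bdry c) (s, i, false) = 0.
Proof.
move=> births; apply: bdry_eq0 => x vx /(coface_at_birth births vx) ->.
by apply: bdry_eq0 => x' vx' /(coface_of_horizontal vx'); lia.
Qed.

Lemma bdry_bdry_at_death c s (i : 'I_n.+1) :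
  tmax s = i -> bdry (bdry c) (s, i, false) = 0.
Proof.
move=> dies; apply: bdry_eq0 => x vx /(coface_at_death dies vx) [j -> ji].
by apply: bdry_eq0 => x' vx' /(coface_of_horizontal vx'); lia.
Qed.

Lemma eq0_contra (a : F) (Q : Prop) : (a != 0 -> Q) -> ~ Q -> a = 0.
Proof. by move=> aQ nQ; apply/eqP; apply: contraT => /aQ. Qed.

Lemma in_image_coeff_eq0 p P' P z y :
  in_image p P' P z -> ~ P'.1 y -> ~ P.2 y ->
  (forall x, valid x -> bd_cell F x y != 0 -> ~ P.1 x) -> z y = 0.
Proof.
move=> [z' [[z'X _] [e [a [eX aA zE]]]]] y'X yA cofX.
rewrite -(subrK z' z) zE !ffunE.
rewrite (eq0_contra (fun h => (z'X y h).1) y'X) (eq0_contra (aA y) yA) !addr0.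
apply: bdry_eq0 => x vx xy; apply: (eq0_contra (fun h => (eX x h).1)).
exact: cofX.
Qed.

Lemma in_image_bdry_eq0 p P' P z y :
  in_image p P' P z -> ~ P'.2 y ->
  (forall x, valid x -> bd_cell F x y != 0 -> ~ P.2 x) ->
  (forall c, bdry (bdry c) y = 0) -> bdry z y = 0.
Proof.
move=> [z' [[_ z'A] [e [a [_ aA zE]]]]] y'A cofA bdry_bdry_y.
have -> : bdry z y = bdry (bdry e) y + bdry a y + bdry z' y.
  rewrite !bdryE -!big_split; apply: eq_bigr => x _.
  by rewrite -(subrK z' z) zE !ffunE !mulrDl.
rewrite bdry_bdry_y (eq0_contra (z'A y) y'A) add0r addr0.
by apply: bdry_eq0 => x vx xy; apply: (eq0_contra (aA x)); apply: cofA.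
Qed.

Lemma coeff_at_birth_eq0 p P' P z s (i : 'I_n.+1) :
  in_image p P' P z -> tmin s = i ->
  ~ P'.1 (s, i, false) -> ~ P.2 (s, i, false) -> ~ P.1 (s, i, true) ->
  z (s, i, false) = 0.
Proof.
move=> img births ?? cofX; apply: (in_image_coeff_eq0 img) => // x vx.
by move/(coface_at_birth births vx) ->.
Qed.

Lemma coeff_at_death_eq0 p P' P z s (i : 'I_n.+1) :
  in_image p P' P z -> tmax s = i ->
  ~ P'.1 (s, i, false) -> ~ P.2 (s, i, false) ->
  (forall j : 'I_n.+1, j.+1 = i -> ~ P.1 (s, j, true)) ->
  z (s, i, false) = 0.
Proof.
move=> img dies ?? cofX; apply: (in_image_coeff_eq0 img) => // x vx.
by move/(coface_at_death dies vx) => [j -> /cofX].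
Qed.

Lemma bdry_at_birth_eq0 p P' P z s (i : 'I_n.+1) :
  in_image p P' P z -> tmin s = i ->
  ~ P'.2 (s, i, false) -> ~ P.2 (s, i, true) -> bdry z (s, i, false) = 0.
Proof.
move=> img births ? cofA; apply: (in_image_bdry_eq0 img) => //.
  by move=> x vx /(coface_at_birth births vx) ->.
by move=> c; apply: bdry_bdry_at_birth.
Qed.

Lemma bdry_at_death_eq0 p P' P z s (i : 'I_n.+1) :
  in_image p P' P z -> tmax s = i ->
  ~ P'.2 (s, i, false) ->
  (forall j : 'I_n.+1, j.+1 = i -> ~ P.2 (s, j, true)) ->
  bdry z (s, i, false) = 0.
Proof.
move=> img dies ? cofA; apply: (in_image_bdry_eq0 img) => //.
  by move=> x vx /(coface_at_death dies vx) [j -> /cofA].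
by move=> c; apply: bdry_bdry_at_death.
Qed.

End PrismBoundary.

Theorem theorem5p3 (F : fieldType) (n : nat) (K : dcx n) (HK : dcx_axioms K)
    (b d p : nat) (hbd : (b < d)%N) (hdn : (d <= n)%N) :
  [/\
   (* (1) *)
   forall (z : chain F K) (s t : simp K) (ib id : 'I_n.+1),
     nat_of_ord ib = b -> nat_of_ord id = d ->
     relcycle p (KOC K (Posz b) (Posz d)) z ->
     tmin t = d -> z (t, id, false) != 0 ->
     tmin s = b -> bdry z (s, ib, false) != 0 ->
     ~ in_image p (KOC K (Posz b - 1) (Posz d)) (KOC K (Posz b) (Posz d)) z /\
     ~ in_image p (KOC K (Posz b) (Posz d - 1)) (KOC K (Posz b) (Posz d)) z,
   (* (2) *)
   forall (z : chain F K) (s t : simp K) (ib id : 'I_n.+1),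
     nat_of_ord ib = b -> nat_of_ord id = d ->
     relcycle p (KCO K (Posz b) (Posz d)) z ->
     tmax t = b -> z (t, ib, false) != 0 ->
     tmax s = d -> bdry z (s, id, false) != 0 ->
     ~ in_image p (KCO K (Posz b + 1) (Posz d)) (KCO K (Posz b) (Posz d)) z /\
     ~ in_image p (KCO K (Posz b) (Posz d + 1)) (KCO K (Posz b) (Posz d)) z,
   (* (3) *)
   forall (z : chain F K) (s t : simp K) (ib id : 'I_n.+1),
     nat_of_ord ib = b -> nat_of_ord id = d ->
     relcycle p (KCC K (Posz b) (Posz d)) z ->
     tmax s = b -> z (s, ib, false) != 0 ->
     tmin t = d -> z (t, id, false) != 0 ->
     ~ in_image p (KCC K (Posz b + 1) (Posz d)) (KCC K (Posz b) (Posz d)) z /\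
     ~ in_image p (KCC K (Posz b) (Posz d - 1)) (KCC K (Posz b) (Posz d)) z &
   (* (4) *)
   forall (z : chain F K) (s t : simp K) (ib id : 'I_n.+1),
     nat_of_ord ib = b -> nat_of_ord id = d ->
     relcycle p (KOO K (Posz b) (Posz d)) z ->
     tmin s = b -> bdry z (s, ib, false) != 0 ->
     tmax t = d -> bdry z (t, id, false) != 0 ->
     ~ in_image p (KOO K (Posz b - 1) (Posz d)) (KOO K (Posz b) (Posz d)) z /\
     ~ in_image p (KOO K (Posz b) (Posz d + 1)) (KOO K (Posz b) (Posz d)) z].
Proof.
split=> z s t ib id eb ed _; subst b d.
- move=> birth_t zt birth_s bs; split=> img.
  + apply/(negP bs)/eqP; apply: (bdry_at_birth_eq0 HK img birth_s); rewrite /inK /=; lia.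
  + apply/(negP zt)/eqP; apply: (coeff_at_birth_eq0 HK img birth_t); rewrite /inK /=; lia.
- move=> death_t zt death_s bs; split=> img.
  + apply/(negP zt)/eqP; apply: (coeff_at_death_eq0 HK img death_t) => [||j];
      rewrite /inK /=; lia.
  + apply/(negP bs)/eqP; apply: (bdry_at_death_eq0 HK img death_s) => [|j];
      rewrite /inK /=; lia.
- move=> death_s zs birth_t zt; split=> img.
  + apply/(negP zs)/eqP; apply: (coeff_at_death_eq0 HK img death_s) => [||j];
      rewrite /inK /=; lia.
  + apply/(negP zt)/eqP; apply: (coeff_at_birth_eq0 HK img birth_t); rewrite /inK /=; lia.
- move=> birth_s bs death_t bt; split=> img.
  + apply/(negP bs)/eqP; apply: (bdry_at_birth_eq0 HK img birth_s); rewrite /inK /=; lia.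
  + apply/(negP bt)/eqP; apply: (bdry_at_death_eq0 HK img death_t) => [|j];
      rewrite /inK /=; lia.
Qed.
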